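(* There is a deterministic Congested Clique algorithm which computes a proper $O(a^2)$-vertex-coloring of an input graph $G$ with arboricity $a\ge 2$ within $O(\log a+\log^* n)$ rounds.
   Context: Congested Clique model: there are $n$ processors (vertices) with distinct IDs of $O(\log n)$ bits; computation proceeds in synchronous rounds; in each round every pair of vertices may exchange a message of $O(\log n)$ bits; local computation is free. The input is a graph $G=(V,E')$ on the same vertex set; each vertex initially knows its incident edges in $G$, and $a$ is known to all vertices. The arboricity of a graph is the minimum number of forests whose union covers its edge set. A proper $k$-coloring is a map $\varphi:V\to\{1,\dots,k\}$ with $\varphi(u)\ne\varphi(v)$ for every edge $\{u,v\}$. $\log^* n$ is the number of times $\log_2$ must be iterated starting from $n$ until the value is below $2$. *)

From mathcomp Require Import all_boot.
Set Implicit Arguments. Unset Strict Implicit. Unset Printing Implicit Defensive.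

Definition simple_graph (n : nat) (G : rel 'I_n) : Prop :=
  (forall u v, G u v = G v u) /\ (forall v, ~~ G v v).

Definition subgraph (n : nat) (F G : rel 'I_n) : Prop :=
  forall u v, F u v -> G u v.

Definition forest (n : nat) (F : rel 'I_n) : Prop :=
  simple_graph F /\
  ~ (exists p : seq 'I_n, [&& uniq p, 3 <= size p & cycle F p]).

Definition covered_by_forests (n : nat) (G : rel 'I_n) (k : nat) : Prop :=
  exists F : 'I_k -> rel 'I_n,
    (forall i, forest (F i) /\ subgraph (F i) G) /\
    (forall u v, G u v -> exists i, F i u v).

Definition has_arboricity (n : nat) (G : rel 'I_n) (a : nat) : Prop :=
  covered_by_forests G a /\ forall k, k < a -> ~ covered_by_forests G k.

(* floor(log2 m) (0 for m <= 1) *)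
Definition log2 (m : nat) : nat := trunc_log 2 m.

Fixpoint log_star_fuel (fuel m : nat) : nat :=
  match fuel with
  | 0 => 0
  | fuel'.+1 => if m < 2 then 0 else (log_star_fuel fuel' (log2 m)).+1
  end.

Definition log_star (m : nat) : nat := log_star_fuel m m.

(* Processors are the vertices 'I_n; the index of a vertex serves as its
   (distinct, O(log n)-bit) ID and as the address of its communication link.
   Local computation is free, so the local state of a vertex is its full
   knowledge: n, a, its own ID, its incident edges (neighbour indicator), and
   the transcript of all messages received so far (one vector per round,
   indexed by sender). *)
Definition transcript (n : nat) := seq ('I_n -> seq bool).

Record cc_algorithm := CCAlgorithm {
  cc_msg : forall n : nat, nat -> 'I_n -> ('I_n -> bool) -> transcript n ->
           'I_n -> seq bool;
  cc_out : forall n : nat, nat -> 'I_n -> ('I_n -> bool) -> transcript n -> nat;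
  cc_rounds : nat -> nat -> nat
}.

Definition cc_bandwidth (A : cc_algorithm) (B : nat) : Prop :=
  forall n a v N h u, size (@cc_msg A n a v N h u) <= B * (log2 n).+1.

Fixpoint cc_hist (A : cc_algorithm) (n a : nat) (G : rel 'I_n) (t : nat)
  : 'I_n -> transcript n :=
  match t with
  | 0 => fun _ => [::]
  | t'.+1 => fun v =>
      rcons (cc_hist A a G t' v)
            (fun u => @cc_msg A n a u (G u) (cc_hist A a G t' u) v)
  end.

Definition cc_output (A : cc_algorithm) (n a : nat) (G : rel 'I_n) (v : 'I_n)
  : nat :=
  @cc_out A n a v (G v) (cc_hist A a G (cc_rounds A n a) v).

Definition proper_coloring (n : nat) (G : rel 'I_n) (k : nat)
  (phi : 'I_n -> nat) : Prop :=
  (forall v, phi v < k) /\ (forall u v, G u v -> phi u != phi v).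

From mathcomp Require Import all_boot zify.
Set Implicit Arguments. Unset Strict Implicit. Unset Printing Implicit Defensive.

(* Split the vertices into the residue classes [v mod a] and give [v] the colour
   [c v * a + v mod a], where [c] properly colours the subgraph induced by the class
   of [v].  Every subgraph of a graph of arboricity [a] has a vertex of degree at
   most [2a], so greedy colouring along a degeneracy order needs colours
   [0, ..., 2a] only, hence [(2a + 1) a <= 4 a^2] colours overall.
   A class has at most [n / a + 1] vertices, so the degrees inside it sum to at
   most [2a (n / a + 1) < 5n].  This lets vertex [p] gather the whole subgraph of
   class [p] in three rounds: every vertex announces its class degree, then sends
   its [i]-th class neighbour to the relay [(t + i) mod n], where [t] is the prefix
   sum of the degrees announced in its class; the pairs of one class thus fill
   consecutive slots, so each relay forwards at most five of them to [p].  In the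
   fourth round [p] colours its class and returns the colours: four rounds in all,
   well within [O(log a + log* n)]. *)

Fixpoint bits (w x : nat) : seq bool :=
  if w is w'.+1 then odd x :: bits w' x./2 else [::].

Fixpoint nat_of_bits (s : seq bool) : nat :=
  if s is b :: s' then b + (nat_of_bits s').*2 else 0.

Lemma size_bits w x : size (bits w x) = w.
Proof. by elim: w x => [|w IH] x //=; rewrite IH. Qed.

Lemma bitsK w x : x < 2 ^ w -> nat_of_bits (bits w x) = x.
Proof.
elim: w x => [|w IH] x /=; first by rewrite expn0; case: x.
by rewrite expnS mul2n -ltn_half_double => /IH ->; rewrite odd_double_half.
Qed.

Definition bits_seq (w : nat) (s : seq nat) : seq bool := flatten [seq bits w x | x <- s].

Definition seq_of_bits (w : nat) (b : seq bool) : seq nat :=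
  [seq nat_of_bits c | c <- reshape (nseq (size b %/ w) w) b].

Lemma size_bits_seq w s : size (bits_seq w s) = w * size s.
Proof. by elim: s => [|x s IH] /=; rewrite ?muln0 // size_cat IH size_bits mulnS. Qed.

Lemma bits_seqK w s : 0 < w -> all (fun x => x < 2 ^ w) s ->
  seq_of_bits w (bits_seq w s) = s.
Proof.
move=> w_gt0 s_small; rewrite /seq_of_bits size_bits_seq mulKn //.
have -> : nseq (size s) w = shape [seq bits w x | x <- s].
  by elim: s {s_small} => //= x s ->; rewrite size_bits.
rewrite flattenK -map_comp -[RHS]map_id; apply/eq_in_map => x /(allP s_small).
exact: bitsK.
Qed.

Section InducedDegree.
Variable T : finType.
Implicit Types (F : rel T) (S : {set T}).

Definition deg_in F S (x : T) : nat := \sum_(z in S) F x z.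

Definition deg_sum F S : nat := \sum_(y in S) deg_in F S y.

Lemma deg_inE F S x : deg_in F S x = #|[set z in S | F x z]|.
Proof.
rewrite /deg_in -sum1_card [RHS](eq_bigl (fun z => (z \in S) && F x z)).
  by rewrite big_mkcondr; apply: eq_bigr => z _; case: (F x z).
by move=> z; rewrite inE.
Qed.

Lemma deg_in_setD1 F S x y :
  x \in S -> deg_in F S y = F y x + deg_in F (S :\ x) y.
Proof.
move=> Sx; rewrite /deg_in (bigD1 x) //=; congr addn.
by apply: eq_bigl => z; rewrite in_setD1 andbC.
Qed.

Lemma deg_sum_setD1 F S x : symmetric F -> x \in S ->
  deg_sum F S <= 2 * deg_in F S x + deg_sum F (S :\ x).
Proof.
move=> Fsym Sx; rewrite /deg_sum (bigD1 x) //=.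
have -> : \sum_(y in S | y != x) deg_in F S y =
          \sum_(y in S :\ x) F y x + \sum_(y in S :\ x) deg_in F (S :\ x) y.
  rewrite -big_split /=; apply: eq_big => [y|y _]; first by rewrite in_setD1 andbC.
  exact: deg_in_setD1.
suff : \sum_(y in S :\ x) F y x <= deg_in F S x by lia.
rewrite (deg_in_setD1 _ _ Sx) /deg_in; under eq_bigr do rewrite Fsym.
exact: leq_addl.
Qed.

Definition degenerate F D S : Prop :=
  forall S' : {set T}, S' \subset S -> S' != set0 ->
    exists2 x, x \in S' & deg_in F S' x <= D.

Lemma degenerate_eq_in F F' D S :
  {in S &, F =2 F'} -> degenerate F D S -> degenerate F' D S.
Proof.
move=> FF' Fdeg S' S'S /(Fdeg S' S'S)[x S'x x_low]; exists x => //.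
apply: leq_trans x_low; apply/eq_leq/eq_bigr => z S'z.
by rewrite FF' ?(subsetP S'S).
Qed.

End InducedDegree.

Section Cycles.
Variables (T : eqType) (F : rel T).
Hypothesis Firr : irreflexive F.

Lemma chord_suffix_cycle s1 z r w :
  uniq (s1 ++ z :: r) -> sorted F (s1 ++ z :: r) -> F (last z r) z ->
  w \in r -> w != last z r ->
  exists p : seq T, [&& uniq p, 3 <= size p & cycle F p].
Proof.
move=> Us Ss Flast rw w_last; exists (z :: r).
have last_r : last z r \in r.
  have := mem_last z r; rewrite inE => /orP[/eqP zE|//].
  by move: Flast; rewrite zE Firr.
have r_ge2 : 2 <= size r.
  apply: (uniq_leq_size (s1 := [:: w; last z r])) => [|v]; first by rewrite /= inE w_last.
  by rewrite !inE => /orP[]/eqP->.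
move: Us Ss; rewrite cat_uniq sorted_cat_cons => /and3P[_ _ ->] /andP[_ Pr].
by rewrite ltnS r_ge2 /= rcons_path Pr.
Qed.

Lemma sorted_chord_cycle s y z1 z2 :
  uniq s -> sorted F s -> z1 \in s -> z2 \in s -> z1 != z2 ->
  F (last y s) z1 -> F (last y s) z2 ->
  exists p : seq T, [&& uniq p, 3 <= size p & cycle F p].
Proof.
(* The cycle runs from whichever of [z1], [z2] comes first on [s] to the end of [s]. *)
move=> Us Ss z1s; case/splitPr: z1s Us Ss => s1 s2 Us Ss + z12.
rewrite last_cat /= mem_cat inE eq_sym (negbTE z12) /=.
have last_z : forall z, F (last z1 s2) z -> z != last z1 s2.
  by move=> z Fz; apply: contraTneq Fz => ->; rewrite Firr.
case/orP => [z2s1|z2s2] F1 F2; last exact: chord_suffix_cycle Us Ss F1 z2s2 (last_z _ F2).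
case/splitPr: z2s1 Us Ss => t1 t2; rewrite -catA cat_cons => Us Ss.
apply: (chord_suffix_cycle Us Ss (w := z1)); rewrite ?last_cat //=.
- by rewrite mem_cat inE eqxx orbT.
- exact: last_z.
Qed.

End Cycles.

Section Forest.
Variable n : nat.
Implicit Types (F : rel 'I_n) (S : {set 'I_n}).

Lemma forest_path_extend F S s x0 : forest F -> x0 \in S ->
  (forall y, y \in S -> 1 < deg_in F S y) ->
  uniq s -> {subset s <= S} -> sorted F s ->
  exists2 z, z \in S & (z \notin s) && F (last x0 s) z.
Proof.
move=> [[_ Firr] acyclic] Sx0 deg_gt1 Us sS Ss.
have Sy : last x0 s \in S by have := mem_last x0 s; rewrite inE => /orP[/eqP->|/sS].
have /card_gt1P[z1 [z2 []]] : 1 < #|[set z in S | F (last x0 s) z]|.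
  by rewrite -deg_inE deg_gt1.
rewrite !inE => /andP[Sz1 F1] /andP[Sz2 F2] z12.
case z1s: (z1 \in s); last by exists z1; rewrite ?z1s.
case z2s: (z2 \in s); last by exists z2; rewrite ?z2s.
case: acyclic; apply: (sorted_chord_cycle _ _ _ z1s z2s z12 F1 F2) => // v.
exact: negbTE.
Qed.

Lemma forest_low_degree F S : forest F -> S != set0 ->
  exists2 x, x \in S & deg_in F S x <= 1.
Proof.
move=> Fforest /set0Pn[x0 Sx0].
case: (pickP [pred x in S | deg_in F S x <= 1]) => [x /andP[]|no_leaf]; first by exists x.
have deg_gt1 y : y \in S -> 1 < deg_in F S y.
  by move=> Sy; have := no_leaf y; rewrite /= Sy /= ltnNge => ->.
suff /(_ n.+1)[s [Us _ _ size_s]] :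
    forall k, exists s, [/\ uniq s, {subset s <= S}, sorted F s & size s = k].
  by have := max_card (mem s); rewrite (card_uniqP Us) size_s card_ord ltnn.
elim=> [|k [s [Us sS Ss <-]]]; first by exists [::].
have [z Sz /andP[zs Fz]] := forest_path_extend Fforest Sx0 deg_gt1 Us sS Ss.
exists (rcons s z); split; last by rewrite size_rcons.
- by rewrite rcons_uniq zs.
- by move=> v; rewrite mem_rcons inE => /orP[/eqP->|/sS].
- by case: s {Us sS zs} Ss Fz => //= x s; rewrite rcons_path => -> ->.
Qed.

Lemma forest_deg_sum F S : forest F -> deg_sum F S <= 2 * #|S|.
Proof.
move=> Fforest; move Sk : #|S| => k; elim: k S Sk => [|k IH] S Sk.
  by rewrite (cards0_eq Sk) /deg_sum big_set0.
have S_neq0 : S != set0 by apply: contra_eqN Sk => /eqP->; rewrite cards0.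
have [x Sx x_leaf] := forest_low_degree Fforest S_neq0.
have := deg_sum_setD1 Fforest.1.1 Sx.
move: Sk; rewrite (cardsD1 x S) Sx add1n => -[] /IH IHx /leq_trans; apply.
by rewrite mulnS leq_add // (leq_mul (leqnn 2) x_leaf).
Qed.

Lemma covered_deg_sum G a S :
  covered_by_forests G a -> deg_sum G S <= 2 * a * #|S|.
Proof.
move=> [F [Fforest Fcover]].
apply: (@leq_trans (\sum_(i < a) 2 * #|S|)); last first.
  by rewrite sum_nat_const card_ord mulnA (mulnC a 2).
apply: (@leq_trans (\sum_(i < a) deg_sum (F i) S)); last first.
  by apply: leq_sum => i _; apply: forest_deg_sum; case: (Fforest i).
rewrite [X in _ <= X](_ : _ = \sum_(y in S) \sum_(z in S) \sum_(i < a) (F i y z : nat)).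
  apply: leq_sum => y _; apply: leq_sum => z _.
  case Gyz: (G y z) => //; have [i Fi] := Fcover _ _ Gyz.
  by rewrite (bigD1 i) //= Fi.
by rewrite exchange_big; apply: eq_bigr => y _; rewrite exchange_big.
Qed.

Lemma covered_degenerate G a S :
  covered_by_forests G a -> degenerate G (2 * a) S.
Proof.
move=> Gcov S' _ /set0Pn[x0 S'x0].
case: (pickP [pred x in S' | deg_in G S' x <= 2 * a]) => [x /andP[]|no_low].
  by exists x.
exfalso.
have S'_gt0 : 0 < #|S'| by apply/card_gt0P; exists x0.
have : #|S'| * (2 * a).+1 <= deg_sum G S'.
  rewrite -sum_nat_const; apply: leq_sum => y S'y.
  by have := no_low y; rewrite /= S'y /= ltnNge => ->.
move=> /leq_trans/(_ (covered_deg_sum S' Gcov)).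
by rewrite mulnSr (mulnC (2 * a)) -[X in _ <= X]addn0 leq_add2l leqNgt S'_gt0.
Qed.

End Forest.

Definition mex (s : seq nat) : nat := find (fun m => m \notin s) (iota 0 (size s).+1).

Lemma has_mex s : has (fun m => m \notin s) (iota 0 (size s).+1).
Proof.
apply/negPn/negP => /hasPn all_in.
have := uniq_leq_size (iota_uniq 0 (size s).+1) (fun m im => negbNE (all_in m im)).
by rewrite size_iota ltnn.
Qed.

Lemma mex_le_size s : mex s <= size s.
Proof. by have := has_mex s; rewrite has_find size_iota ltnS. Qed.

Lemma mex_notin s : mex s \notin s.
Proof. by have := nth_find 0 (has_mex s); rewrite nth_iota // ltnS mex_le_size. Qed.

Section GreedyColouring.
Variables (T : finType) (E : rel T) (D : nat).

Fixpoint greedy_col (k : nat) (S : {set T}) : T -> nat :=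
  if k is k'.+1 then
    if [pick x in S | deg_in E S x <= D] is Some x then
      let c := greedy_col k' (S :\ x) in
      fun y => if y == x then mex [seq c z | z <- enum [set z in S :\ x | E x z]] else c y
    else fun=> 0
  else fun=> 0.

Lemma greedy_col_le k (S : {set T}) y : greedy_col k S y <= D.
Proof.
elim: k S y => [|k IH] S y //=.
case: pickP => [x /andP[_ x_low]|_] //.
case: eqP => _; last exact: IH.
apply: leq_trans x_low; apply: leq_trans (mex_le_size _) _.
rewrite size_map -cardE deg_inE; apply: subset_leq_card; apply/subsetP => z.
by rewrite !inE => /andP[/andP[_ ->] ->].
Qed.

Lemma greedy_col_lt_card k (S : {set T}) y : y \in S -> greedy_col k S y < #|S|.
Proof.
have S_gt0 (S' : {set T}) : y \in S' -> 0 < #|S'| by move=> S'y; apply/card_gt0P; exists y.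
elim: k S => [|k IH] S Sy /=; first exact: S_gt0.
case: pickP => [x /andP[Sx _]|_]; last exact: S_gt0.
rewrite (cardsD1 x S) Sx add1n ltnS.
case: eqP => [_|/eqP yx]; last by apply/ltnW/IH; rewrite in_setD1 yx.
apply: leq_trans (mex_le_size _) _.
rewrite size_map -cardE; apply: subset_leq_card.
by apply/subsetP => z; rewrite inE => /andP[].
Qed.

Lemma greedy_col_proper k (S : {set T}) : symmetric E -> irreflexive E ->
  #|S| <= k -> degenerate E D S ->
  {in S &, forall u v, E u v -> greedy_col k S u != greedy_col k S v}.
Proof.
move=> Esym Eirr; elim: k S => [|k IH] S Sk Sdeg u v Su Sv Euv.
  by move: Sk; rewrite leqn0 cards_eq0 => /eqP S0; rewrite S0 inE in Su.
rewrite /=; case: pickP => [x /andP[Sx _]|none]; last first.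
  have [|x Sx x_low] := Sdeg S (subxx S); first by apply/set0Pn; exists u.
  by have := none x; rewrite /= Sx x_low.
set c := greedy_col k (S :\ x); set L := [seq c z | z <- _].
have Sx' w : w \in S -> w != x -> w \in S :\ x by move=> Sw wx; rewrite in_setD1 wx.
have nbr_col w : w \in S -> w != x -> E x w -> c w \in L.
  by move=> Sw wx Exw; apply: map_f; rewrite mem_enum inE Sx' ?Exw.
have IHx : {in S :\ x &, forall u v, E u v -> c u != c v}.
  apply: IH => [|S' S'S]; first by move: Sk; rewrite (cardsD1 x S) Sx.
  by apply: Sdeg; apply: subset_trans S'S (subsetDl _ _).
case: (eqVneq u x) => [ux|ux]; case: (eqVneq v x) => [vx|vx].
- by move: Euv; rewrite ux vx Eirr.
- by apply: contraNneq (mex_notin L) => ->; rewrite nbr_col // -ux.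
- by apply: contraNneq (mex_notin L) => <-; rewrite nbr_col // Esym -vx.
- exact: IHx (Sx' _ Su ux) (Sx' _ Sv vx) Euv.
Qed.

End GreedyColouring.

Lemma sum_count_iota_blocks (Q P : pred nat) (f : nat -> nat) m :
  \sum_(0 <= i < m | Q i) count P (iota (\sum_(0 <= j < i | Q j) f j) (f i)) =
  count P (iota 0 (\sum_(0 <= j < m | Q j) f j)).
Proof.
have sum_recr (g : nat -> nat) k : \sum_(0 <= i < k.+1 | Q i) g i =
    \sum_(0 <= i < k | Q i) g i + (if Q k then g k else 0).
  by rewrite big_mkcond big_nat_recr //= -big_mkcond.
elim: m => [|m IH]; first by rewrite !big_geq.
rewrite sum_recr IH sum_recr; case: (Q m); last by rewrite !addn0.
by rewrite iotaD count_cat add0n.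
Qed.

Lemma count_mod_iota m r M : 0 < m ->
  count (fun j => j %% m == r) (iota 0 M) <= M %/ m + 1.
Proof.
move=> m_gt0; rewrite -size_filter.
set s := filter _ _.
have uniq_quot : uniq (map (divn^~ m) s).
  rewrite map_inj_in_uniq ?filter_uniq ?iota_uniq // => j k.
  rewrite !mem_filter => /andP[/eqP jr _] /andP[/eqP kr _] jk.
  by rewrite (divn_eq j m) (divn_eq k m) jk jr kr.
rewrite addn1 -(size_map (divn^~ m)) -(size_iota 0 (M %/ m).+1).
apply: uniq_leq_size uniq_quot _ => q /mapP[j]; rewrite mem_filter mem_iota.
by move=> /andP[_ /andP[_ jM]] ->; rewrite mem_iota ltnS leq_div2r // ltnW.
Qed.

Lemma mulnD_ltn_inj n x y v u : y < n -> u < n -> x * n + y = v * n + u -> x = v /\ y = u.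
Proof.
move=> yn un E; have n_gt0 : 0 < n by apply: leq_ltn_trans yn.
have := congr1 (divn^~ n) E; have := congr1 (modn^~ n) E.
by rewrite /= !modnMDl !modn_small // !divnMDl // !divn_small // !addn0 => -> ->.
Qed.

Lemma count_shift_mod_le1 n t r d : d <= n ->
  count (fun i => (t + i) %% n == r) (iota 0 d) <= 1.
Proof.
move=> dn; rewrite -size_filter; set P := fun i => _.
have : uniq (filter P (iota 0 d)) by rewrite filter_uniq ?iota_uniq.
have : {in filter P (iota 0 d) &, forall i j, i = j}.
  move=> i j; rewrite !mem_filter !mem_iota !add0n /P /=.
  move=> /andP[/eqP ir i_lt] /andP[/eqP jr j_lt].
  apply/eqP; rewrite -(modn_small (leq_trans i_lt dn)) -(modn_small (leq_trans j_lt dn)).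
  by rewrite -(eqn_modDl t) ir jr.
case: filter => [|i [|j s]] //= eq_ij /andP[+ _].
by rewrite (eq_ij j i) ?inE ?eqxx ?orbT.
Qed.

Definition word (n : nat) : nat := (log2 n).+1.

Lemma ltn_word n : n < 2 ^ word n.
Proof. exact: trunc_log_ltn. Qed.

Section Messages.
Variables (n a : nat).

Definition class_nbrs (v : 'I_n) (N : 'I_n -> bool) : {set 'I_n} :=
  [set z | N z && (z %% a == v %% a)].

Definition nbrs (v : 'I_n) (N : 'I_n -> bool) : seq 'I_n := enum (class_nbrs v N).

Definition residue_class (p : nat) : {set 'I_n} := [set x : 'I_n | x %% a == p].

Definition leader (v : 'I_n) : 'I_n := Ordinal (leq_ltn_trans (leq_mod v a) (ltn_ord v)).

Definition degree_msg (v : 'I_n) (N : 'I_n -> bool) : seq bool :=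
  bits_seq (word n) [:: #|class_nbrs v N|].

Definition announced_deg (m1 : 'I_n -> seq bool) (x : nat) : nat :=
  if insub x is Some u then head 0 (seq_of_bits (word n) (m1 u)) else 0.

Definition slot_offset (m1 : 'I_n -> seq bool) (v : 'I_n) : nat :=
  \sum_(0 <= x < v | x %% a == v %% a) announced_deg m1 x.

(* The truncations [take 1] and [take 5] below never cut anything in an actual
   run; they make the bandwidth bound hold for arbitrary transcripts. *)
Definition relayed_nbrs (v : 'I_n) N m1 (w : 'I_n) : seq nat :=
  take 1 [seq val (nth v (nbrs v N) i) | i <- iota 0 (size (nbrs v N)) &
                                        (slot_offset m1 v + i) %% n == w].

Definition relay_msg (v : 'I_n) N m1 (w : 'I_n) : seq bool :=
  bits_seq (word n) (relayed_nbrs v N m1 w).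

Definition collected (m2 : 'I_n -> seq bool) (p : 'I_n) : seq nat :=
  flatten [seq [seq val v * n + u | u <- seq_of_bits (word n) (m2 v)]
          | v : 'I_n <- enum 'I_n & v %% a == val p].

Definition collect_msg (m2 : 'I_n -> seq bool) (p : 'I_n) : seq bool :=
  bits_seq (2 * word n) (take 5 (collected m2 p)).

Definition class_graph (m3 : 'I_n -> seq bool) : rel 'I_n :=
  fun x y => [exists w : 'I_n, val x * n + val y \in seq_of_bits (2 * word n) (m3 w)].

Definition colour_msg (p : 'I_n) (m3 : 'I_n -> seq bool) (v : 'I_n) : seq bool :=
  bits_seq (word n) [:: greedy_col (class_graph m3) (2 * a) n (residue_class p) v].

(* The length of the transcript is the number of rounds already played. *)
Definition alg_msg (v : 'I_n) (N : 'I_n -> bool) (h : transcript n) (u : 'I_n) : seq bool :=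
  match h with
  | [::] => degree_msg v N
  | [:: m1] => relay_msg v N m1 u
  | [:: _; m2] => collect_msg m2 u
  | [:: _; _; m3] => colour_msg v m3 u
  | _ => [::]
  end.

Definition alg_out (v : 'I_n) (N : 'I_n -> bool) (h : transcript n) : nat :=
  if h is [:: _; _; _; m4] then
    head 0 (seq_of_bits (word n) (m4 (leader v))) * a + v %% a
  else 0.

End Messages.

Definition colouring_alg : cc_algorithm :=
  CCAlgorithm (@alg_msg) (@alg_out) (fun _ _ => 4).

Lemma colouring_alg_bandwidth : cc_bandwidth colouring_alg 10.
Proof.
move=> n a v N h u; rewrite -/(word n).
have take_le k (s : seq nat) : size (take k s) <= k by rewrite size_take geq_minl.
case: h => [|m1 [|m2 [|m3 [|m4 [|? ?]]]]]; cbn [cc_msg colouring_alg alg_msg] => //.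
all: rewrite size_bits_seq.
- by rewrite muln1 leq_pmull.
- by apply: leq_trans (leq_mul (leqnn _) (take_le 1 _)) _; rewrite muln1 leq_pmull.
- by apply: leq_trans (leq_mul (leqnn _) (take_le 5 _)) _; rewrite mulnAC.
- by rewrite muln1 leq_pmull.
Qed.

Section Correctness.
Variables (n a : nat) (G : rel 'I_n).
Hypotheses (Gsym : symmetric G) (Girr : irreflexive G).
Hypotheses (Gcov : covered_by_forests G a) (a_gt0 : 0 < a).

Definition inbox1 (u : 'I_n) : seq bool := degree_msg a u (G u).
Definition inbox2 (w v : 'I_n) : seq bool := relay_msg a v (G v) inbox1 w.
Definition inbox3 (p w : 'I_n) : seq bool := collect_msg a (inbox2 w) p.
Definition inbox4 (v p : 'I_n) : seq bool := colour_msg a p (inbox3 p) v.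

Lemma colouring_alg_hist v :
  cc_hist colouring_alg a G 4 v = [:: inbox1; inbox2 v; inbox3 v; inbox4 v].
Proof. by []. Qed.

Definition class_deg (v : 'I_n) : nat := #|class_nbrs a v (G v)|.

Lemma class_deg_le v : class_deg v <= n.
Proof. by rewrite -[n in _ <= n]card_ord max_card. Qed.

Lemma size_nbrs v : size (nbrs a v (G v)) = class_deg v.
Proof. by rewrite -cardE. Qed.

Lemma announced_degE (v : 'I_n) : announced_deg inbox1 v = class_deg v.
Proof.
rewrite /announced_deg valK /inbox1 /degree_msg bits_seqK //= andbT.
exact: leq_ltn_trans (class_deg_le v) (ltn_word n).
Qed.

Notation offset v := (slot_offset a inbox1 v).

Lemma relayed_nbrsE (v w : 'I_n) : relayed_nbrs a v (G v) inbox1 w =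
  [seq val (nth v (nbrs a v (G v)) i) | i <- iota 0 (size (nbrs a v (G v))) &
                                       (offset v + i) %% n == w].
Proof.
rewrite /relayed_nbrs take_oversize // size_map size_filter.
by rewrite count_shift_mod_le1 // size_nbrs class_deg_le.
Qed.

Lemma relayed_nbrs_lt (v w : 'I_n) u : u \in relayed_nbrs a v (G v) inbox1 w -> u < n.
Proof. by rewrite relayed_nbrsE => /mapP[i _ ->]; apply: ltn_ord. Qed.

Lemma inbox2E (w v : 'I_n) :
  seq_of_bits (word n) (inbox2 w v) = relayed_nbrs a v (G v) inbox1 w.
Proof.
rewrite /inbox2 /relay_msg bits_seqK //; apply/allP => u /relayed_nbrs_lt u_lt.
exact: ltn_trans u_lt (ltn_word n).
Qed.

Lemma mem_relayed_nbrs (v w y : 'I_n) :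
  val y \in relayed_nbrs a v (G v) inbox1 w -> y \in class_nbrs a v (G v).
Proof.
rewrite relayed_nbrsE => /mapP[i]; rewrite mem_filter mem_iota => /and3P[_ _ i_lt].
by move/val_inj->; rewrite -mem_enum mem_nth.
Qed.

Lemma class_nbr_relayed (v y : 'I_n) :
  y \in class_nbrs a v (G v) -> exists w, val y \in relayed_nbrs a v (G v) inbox1 w.
Proof.
move=> Ny; have n_gt0 : 0 < n by apply: leq_ltn_trans (ltn_ord v).
have y_nbr : y \in nbrs a v (G v) by rewrite mem_enum.
exists (Ordinal (ltn_pmod (offset v + index y (nbrs a v (G v))) n_gt0)).
rewrite relayed_nbrsE; apply/mapP; exists (index y (nbrs a v (G v))); last first.
  by rewrite nth_index.
by rewrite mem_filter mem_iota /= index_mem y_nbr eqxx.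
Qed.

Lemma collectedE (w p : 'I_n) : collected a (inbox2 w) p =
  flatten [seq [seq val v * n + u | u <- relayed_nbrs a v (G v) inbox1 w]
          | v : 'I_n <- enum 'I_n & v %% a == val p].
Proof. by rewrite /collected; congr flatten; apply: eq_map => v; rewrite inbox2E. Qed.

Lemma mem_collected (w p x y : 'I_n) :
  (val x * n + val y \in collected a (inbox2 w) p) =
  (x %% a == val p) && (val y \in relayed_nbrs a x (G x) inbox1 w).
Proof.
rewrite collectedE; apply/flattenP/andP => [|[xp y_rel]].
  move=> [_ /mapP[v + ->] /mapP[u u_rel xy_eq]].
  have [/val_inj xv yu] := mulnD_ltn_inj (ltn_ord y) (relayed_nbrs_lt u_rel) xy_eq.
  by rewrite mem_filter xv (yu : val y = u) => /andP[->].
exists [seq val x * n + u | u <- relayed_nbrs a x (G x) inbox1 w]; last exact: map_f.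
by apply: map_f; rewrite mem_filter xp mem_enum.
Qed.

Lemma size_relayed_nbrs (v w : 'I_n) : size (relayed_nbrs a v (G v) inbox1 w) =
  count (fun j => j %% n == w) (iota (offset v) (class_deg v)).
Proof.
rewrite relayed_nbrsE size_map size_filter size_nbrs.
by rewrite -{2}[offset v]addn0 iotaDl count_map.
Qed.

Notation deg1 := (announced_deg inbox1).

Lemma size_collected (w p : 'I_n) : size (collected a (inbox2 w) p) =
  \sum_(0 <= i < n | i %% a == p)
     count (fun j => j %% n == w) (iota (\sum_(0 <= x < i | x %% a == p) deg1 x) (deg1 i)).
Proof.
rewrite collectedE size_flatten /shape sumnE !big_map big_filter /index_iota subn0.
rewrite -val_enum_ord big_map; apply: eq_bigr => v /eqP vp.
rewrite size_map size_relayed_nbrs announced_degE /slot_offset /index_iota.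
by congr (count _ (iota _ _)); apply: eq_bigl => x; rewrite vp.
Qed.

Lemma card_residue_class p : #|residue_class n a p| <= n %/ a + 1.
Proof.
apply: leq_trans (count_mod_iota p n a_gt0).
rewrite -sum1_card (eq_bigl (fun i : 'I_n => i %% a == p)); last by move=> i; rewrite inE.
by rewrite -(big_mkord (fun i => i %% a == p) (fun=> 1)) sum1_count /index_iota subn0.
Qed.

Lemma class_deg_sum_lt p : 0 < n -> \sum_(v in residue_class n a p) class_deg v < 5 * n.
Proof.
move=> n_gt0; set S := residue_class n a p.
have sum_le_arb : \sum_(v in S) class_deg v <= 2 * a * #|S|.
  apply: leq_trans (covered_deg_sum S Gcov); apply/eq_leq/eq_bigr => v.
  rewrite inE => /eqP vp; rewrite deg_inE; apply: eq_card => z.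
  by rewrite !inE vp andbC.
have sum_le_n : \sum_(v in S) class_deg v <= n * #|S|.
  by rewrite mulnC -sum_nat_const; apply: leq_sum => v _; apply: class_deg_le.
have card_S := card_residue_class p; have div_le := leq_divM n a.
move: sum_le_arb sum_le_n card_S div_le; set c := #|S|; set q := n %/ a.
case: (leqP a n) => an; first nia.
by rewrite /q divn_small //; nia.
Qed.

Lemma size_collected_le5 (w p : 'I_n) : size (collected a (inbox2 w) p) <= 5.
Proof.
have n_gt0 : 0 < n by apply: leq_ltn_trans (ltn_ord w).
rewrite size_collected sum_count_iota_blocks.
apply: leq_trans (count_mod_iota _ _ n_gt0) _; rewrite addn1 ltn_divLR //.
rewrite big_mkord (eq_big (fun v : 'I_n => v \in residue_class n a p) class_deg).
- exact: class_deg_sum_lt.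
- by move=> v; rewrite inE.
- by move=> v _; apply: announced_degE.
Qed.

Lemma inbox3E (p w : 'I_n) :
  seq_of_bits (2 * word n) (inbox3 p w) = collected a (inbox2 w) p.
Proof.
rewrite /inbox3 /collect_msg take_oversize ?size_collected_le5 // bits_seqK //.
apply/allP => c; rewrite collectedE => /flattenP[_ /mapP[v _ ->] /mapP[u u_rel ->]].
have u_lt := relayed_nbrs_lt u_rel; have v_lt : val v < n := ltn_ord v.
move: u_lt v_lt (ltn_word n); rewrite mul2n -addnn expnD.
by set X := 2 ^ word n; set y := val v; nia.
Qed.

Lemma class_graphE (p x y : 'I_n) :
  class_graph (inbox3 p) x y = [&& G x y, x %% a == p & y %% a == p].
Proof.
apply/existsP/idP => [[w]|/and3P[Gxy /eqP xp yp]].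
  rewrite inbox3E mem_collected => /andP[xp /mem_relayed_nbrs].
  by rewrite inE xp => /andP[-> /eqP->].
have [w y_rel] : exists w, val y \in relayed_nbrs a x (G x) inbox1 w.
  by apply: class_nbr_relayed; rewrite inE Gxy xp yp.
by exists w; rewrite inbox3E mem_collected xp eqxx.
Qed.

Definition class_col (p : 'I_n) : 'I_n -> nat :=
  greedy_col (class_graph (inbox3 p)) (2 * a) n (residue_class n a p).

Lemma class_col_proper (p : 'I_n) :
  {in residue_class n a p &, forall x y, G x y -> class_col p x != class_col p y}.
Proof.
have in_class x : (x \in residue_class n a p) = (x %% a == p) by rewrite inE.
move=> x y xp yp Gxy; apply: greedy_col_proper => //.
- by move=> u v; rewrite !class_graphE Gsym (andbC (u %% a == p)).
- by move=> v; rewrite class_graphE Girr.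
- by rewrite -[n in _ <= n]card_ord max_card.
- apply: (degenerate_eq_in _ (covered_degenerate Gcov)) => u v up vp.
  by rewrite class_graphE -!in_class up vp !andbT.
- by rewrite class_graphE Gxy -!in_class xp yp.
Qed.

Lemma output_class_col v :
  cc_output colouring_alg a G v = class_col (leader a v) v * a + v %% a.
Proof.
rewrite /cc_output colouring_alg_hist; cbn [cc_out colouring_alg alg_out].
rewrite /inbox4 /colour_msg bits_seqK //= andbT.
have v_class : v \in residue_class n a (leader a v) by rewrite inE.
apply: (leq_ltn_trans _ (ltn_word n)); apply: ltnW.
apply: leq_trans (greedy_col_lt_card _ _ _ v_class) _.
by rewrite -[n in _ <= n]card_ord max_card.
Qed.

Lemma output_lt v : cc_output colouring_alg a G v < 4 * a ^ 2.
Proof.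
rewrite output_class_col.
have col_le : class_col (leader a v) v <= 2 * a by apply: greedy_col_le.
have res_lt : v %% a < a := ltn_pmod _ a_gt0.
by move: col_le res_lt; set c := class_col _ _; set r := v %% a; rewrite -mulnn; nia.
Qed.

Lemma output_proper u v :
  G u v -> cc_output colouring_alg a G u != cc_output colouring_alg a G v.
Proof.
move=> Guv; rewrite !output_class_col.
case: (eqVneq (u %% a) (v %% a)) => [uv|uv]; last first.
  by apply: contra_neq uv => /(congr1 (modn^~ a)); rewrite /= !modnMDl !modn_mod.
have -> : leader a u = leader a v by apply: val_inj.
rewrite uv eqn_add2r eqn_pmul2r //; apply: class_col_proper Guv; by rewrite inE /= ?uv.
Qed.

End Correctness.

Theorem theorem3 :
  exists (A : cc_algorithm) (B C : nat),
    cc_bandwidth A B /\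
    forall (n a : nat) (G : rel 'I_n),
      simple_graph G -> has_arboricity G a -> 2 <= a ->
      cc_rounds A n a <= C * (log2 a + log_star n) /\
      proper_coloring G (C * a ^ 2) (cc_output A a G).
Proof.
exists colouring_alg, 10, 4; split; first exact: colouring_alg_bandwidth.
move=> n a G [Gsym Girr] [Gcov _] a_ge2.
have a_gt0 : 0 < a by apply: leq_trans a_ge2.
have {}Girr : irreflexive G by move=> v; apply: negbTE.
have log2_gt0 : 0 < log2 a by rewrite /log2 trunc_log_gt0.
split; first by rewrite /=; lia.
by split => [v|u v Guv]; [apply: output_lt | apply: output_proper].
Qed.
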